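(* Let $V$ be a metric 3-Lie algebra and $I\lhd V$ an ideal. Then (1) $I^\perp\lhd V$ is also an ideal; (2) $I^\perp\lhd Z(I)$; and (3) if $I$ is minimal then $I^\perp$ is maximal.
   Context: A metric 3-Lie algebra is a finite-dimensional real vector space $V$ with a totally skewsymmetric trilinear bracket satisfying the fundamental identity $[x,y,[z,s,t]]=[[x,y,z],s,t]+[z,[x,y,s],t]+[z,s,[x,y,t]]$ and a nondegenerate symmetric bilinear form $\langle-,-\rangle$ with $\langle[x,y,z],s\rangle+\langle z,[x,y,s]\rangle=0$. For subspaces $W_i$, $[W_1,W_2,W_3]$ is the span of brackets of their elements. An ideal $I\lhd V$ is a subspace with $[I,V,V]\subset I$; for a subalgebra $S$ (subspace with $[S,S,S]\subset S$), $I\lhd S$ means $I\subset S$ and $[I,S,S]\subset I$. $I^\perp$ is the orthogonal complement with respect to $\langle-,-\rangle$. The centraliser of a subspace $W$ is $Z(W)=\{z\in V:[z,w,y]=0\ \forall w\in W,y\in V\}$ (a subalgebra). An ideal $I$ is minimal if every ideal contained in $I$ is $0$ or $I$; maximal if every ideal containing $I$ is $I$ or $V$. *)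

From HB Require Import structures.
From mathcomp Require Import all_boot all_order all_algebra.
From mathcomp Require Import reals.
Set Implicit Arguments. Unset Strict Implicit. Unset Printing Implicit Defensive.
Import Order.TTheory GRing.Theory Num.Theory.
Local Open Scope ring_scope.

Section Metric3Lie.
Variables (R : realType) (V : vectType R).
Variable br : V -> V -> V -> V.
Variable form : V -> V -> R.

Record metric3Lie : Prop := Metric3Lie {
  br_linear1 : forall (a : R) x x' y z, br (a *: x + x') y z = a *: br x y z + br x' y z;
  br_linear2 : forall (a : R) x y y' z, br x (a *: y + y') z = a *: br x y z + br x y' z;
  br_linear3 : forall (a : R) x y z z', br x y (a *: z + z') = a *: br x y z + br x y z';
  br_skew12 : forall x y z, br x y z = - br y x z;
  br_skew23 : forall x y z, br x y z = - br x z y;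
  br_fundamental : forall x y z s t,
    br x y (br z s t) = br (br x y z) s t + br z (br x y s) t + br z s (br x y t);
  form_linear1 : forall (a : R) x x' y, form (a *: x + x') y = a * form x y + form x' y;
  form_sym : forall x y, form x y = form y x;
  form_nondeg : forall x, (forall y, form x y = 0) -> x = 0;
  form_invariant : forall x y z s, form (br x y z) s + form z (br x y s) = 0
}.

(* I is an ideal: [I, V, V] is contained in I (I a subspace, so it suffices
   that every bracket [x,y,z] with x in I lies in I). *)
Definition ideal (I : {vspace V}) : Prop :=
  forall x y z, x \in I -> br x y z \in I.

Definition ideal_of (I : {vspace V}) (S : V -> Prop) : Prop :=
  (forall x, x \in I -> S x) /\
  (forall x s t, x \in I -> S s -> S t -> br x s t \in I).

Definition centraliser (W : {vspace V}) : V -> Prop :=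
  fun z => forall w y, w \in W -> br z w y = 0.

Definition minimal_ideal (I : {vspace V}) : Prop :=
  ideal I /\ forall J : {vspace V}, ideal J -> (J <= I)%VS -> J = 0%VS \/ J = I.

Definition maximal_ideal (I : {vspace V}) : Prop :=
  ideal I /\ forall J : {vspace V}, ideal J -> (I <= J)%VS -> J = I \/ J = fullv.

(* Orthogonal complement I^perp, realised as the kernel of the map
   v |-> (form v b_i)_i where (b_i) is the basis vbasis I of I.  When form is
   linear in its first argument, v \in perp I <-> forall w \in I, form v w = 0. *)
Definition perp (I : {vspace V}) : {vspace V} :=
  lker (linfun (fun v : V => \row_(i < \dim I) form v (vbasis I)`_i)
        : 'Hom(V, 'rV[R]_(\dim I))).

End Metric3Lie.

From HB Require Import structures.
From mathcomp Require Import all_boot all_order all_algebra.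
From mathcomp Require Import reals zify.
Set Implicit Arguments. Unset Strict Implicit. Unset Printing Implicit Defensive.
Import Order.TTheory GRing.Theory Num.Theory.
Local Open Scope ring_scope.

(* Invariance of the form moves a bracket across it:
   <[x,y,z], s> = -<z, [x,y,s]>.  If z is orthogonal to an ideal I and s lies
   in I, the right side vanishes, so [x,y,z] is again orthogonal to I; and
   [z,w,y] is orthogonal to everything when w lies in I, hence zero by
   nondegeneracy.  For (3), nondegeneracy also gives dim I + dim I^perp = dim V,
   so perp is an inclusion-reversing involution on ideals and exchanges
   minimal and maximal ones. *)

Lemma linfunE_linear (K : fieldType) (aT rT : vectType K) (f : aT -> rT) :
  linear f -> linfun f =1 f.
Proof.
move=> f_lin x.
exact: (lfunE (HB.pack f (GRing.isLinear.Build K aT rT *:%R f f_lin)) x).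
Qed.

Section OrthogonalComplement.
Variables (R : realType) (V : vectType R) (form : V -> V -> R).
Hypothesis form_linear :
  forall (a : R) x x' y, form (a *: x + x') y = a * form x y + form x' y.
Hypothesis form_symmetric : forall x y, form x y = form y x.
Hypothesis form_nondegenerate : forall x, (forall y, form x y = 0) -> x = 0.

Lemma form0l y : form 0 y = 0.
Proof.
have := form_linear 1 0 0 y; rewrite scale1r addr0 mul1r.
by rewrite -{1}[form 0 y]addr0 => /addrI/esym.
Qed.

Lemma formDl x x' y : form (x + x') y = form x y + form x' y.
Proof. by rewrite -[x in LHS]scale1r form_linear mul1r. Qed.

Lemma formZl a x y : form (a *: x) y = a * form x y.
Proof. by rewrite -[_ *: x]addr0 form_linear form0l addr0. Qed.

Lemma form_vbasis_eq0 (U : {vspace V}) y :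
  (forall i : 'I_(\dim U), form (vbasis U)`_i y = 0) ->
  forall u, u \in U -> form u y = 0.
Proof.
move=> basis0 u Uu; rewrite (coord_vbasis Uu).
elim/big_rec: _ => [|i s _ s0]; first exact: form0l.
by rewrite formDl formZl basis0 s0 mulr0 addr0.
Qed.

Lemma form_row_linear n (b : 'I_n -> V) :
  linear (fun v : V => \row_(i < n) form v (b i)).
Proof. by move=> a u v; apply/rowP => i; rewrite !mxE form_linear. Qed.

Lemma perpP (I : {vspace V}) v :
  reflect (forall w, w \in I -> form v w = 0) (v \in perp form I).
Proof.
rewrite memv_ker linfunE_linear /=; last exact: form_row_linear.
apply: (iffP eqP) => [/rowP row0 w Iw | orth].
  rewrite form_symmetric; apply: (form_vbasis_eq0 _ Iw) => i.
  by have := row0 i; rewrite !mxE form_symmetric.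
apply/rowP => i; rewrite !mxE; apply: orth.
by apply: vbasis_mem; rewrite mem_nth ?size_tuple.
Qed.

Lemma perpS (X Y : {vspace V}) : (X <= Y)%VS -> (perp form Y <= perp form X)%VS.
Proof.
move=> /subvP sXY; apply/subvP => v /perpP orth.
by apply/perpP => w /sXY; apply: orth.
Qed.

Lemma perp0 : perp form 0%VS = fullv.
Proof.
apply/vspaceP => v; rewrite memvf; apply/perpP => w; rewrite memv0 => /eqP ->.
by rewrite form_symmetric form0l.
Qed.

Lemma sub_perpperp (X : {vspace V}) : (X <= perp form (perp form X))%VS.
Proof.
apply/subvP => v Xv; apply/perpP => w /perpP orth.
by rewrite form_symmetric orth.
Qed.

Lemma dim_perp_ge (X : {vspace V}) : (\dim {:V} <= \dim X + \dim (perp form X))%N.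
Proof.
pose f : 'Hom(V, 'rV[R]_(\dim X)) :=
  linfun (fun v => \row_(i < \dim X) form v (vbasis X)`_i).
have := limg_ker_dim f fullv; rewrite capfv.
have : (\dim (f @: fullv) <= \dim X)%N.
  by rewrite (leq_trans (dimvS (subvf _))) // dimvf dim_matrix mul1r.
rewrite /perp -/f; lia.
Qed.

(* A vector of X orthogonal to Y is orthogonal to perp X as well, hence to
   perp X + Y = V. *)
Lemma cap_perp_eq0 (X Y : {vspace V}) :
  (perp form X + Y)%VS = fullv -> (X :&: perp form Y)%VS = 0%VS.
Proof.
move=> full; apply/eqP; rewrite -subv0; apply/subvP => x /memv_capP[Xx /perpP xY].
rewrite memv0; apply/eqP/form_nondegenerate => v.
have : v \in (perp form X + Y)%VS by rewrite full memvf.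
case/memv_addP => p /perpP pX [y Yy ->].
by rewrite form_symmetric formDl pX // add0r form_symmetric xY.
Qed.

Lemma dim_perp (X : {vspace V}) : (\dim X + \dim (perp form X))%N = \dim {:V}.
Proof.
apply/eqP; rewrite eqn_leq dim_perp_ge andbT.
set C := ((perp form X)^C)%VS.
have dimXC : \dim (X + perp form C) = (\dim X + \dim (perp form C))%N.
  by apply/dimv_disjoint_sum/cap_perp_eq0; rewrite addv_complf.
have := dimvS (subvf (X + perp form C)); rewrite dimXC.
have := dim_perp_ge C; have := dimv_compl (perp form X).
have := dimvS (subvf (perp form X)); rewrite -/C; lia.
Qed.

Lemma perpK (X : {vspace V}) : perp form (perp form X) = X.
Proof.
apply/esym/eqP; rewrite eqEdim sub_perpperp /=.
by have := dim_perp X; have := dim_perp (perp form X); lia.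
Qed.

End OrthogonalComplement.

Section Metric3LieIdeals.
Variables (R : realType) (V : vectType R).
Variables (br : V -> V -> V -> V) (form : V -> V -> R).
Hypothesis HV : metric3Lie br form.

Let perpP := perpP (form_linear1 HV) (form_sym HV).
Let perpS := perpS (form_linear1 HV) (form_sym HV).
Let perp0 := perp0 (form_linear1 HV) (form_sym HV).
Let perpK := perpK (form_linear1 HV) (form_sym HV) (form_nondeg HV).

Lemma br_cycle x y z : br x y z = br y z x.
Proof. by rewrite (br_skew12 HV) (br_skew23 HV) opprK. Qed.

Lemma perp_ideal I : ideal br I -> ideal br (perp form I).
Proof.
move=> idI x y z /perpP xI; apply/perpP => w Iw; rewrite br_cycle.
have := form_invariant HV y z x w.
by rewrite xI ?addr0 // 2!br_cycle; apply: idI.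
Qed.

Lemma perp_sub_centraliser I :
  ideal br I -> forall x, x \in perp form I -> centraliser br I x.
Proof.
move=> idI x /perpP xI w y Iw; apply: (form_nondeg HV) => s; rewrite br_cycle.
have := form_invariant HV w y x s.
by rewrite xI ?addr0 //; apply: idI.
Qed.

Lemma perp_minimal_maximal I :
  minimal_ideal br I -> maximal_ideal br (perp form I).
Proof.
move=> [idI minI]; split=> [|J idJ sIJ]; first exact: perp_ideal.
have : (perp form J <= I)%VS by rewrite -[X in (_ <= X)%VS]perpK; apply: perpS.
case/(minI _ (perp_ideal idJ)) => perpJ.
  by right; rewrite -(perpK J) perpJ perp0.
by left; rewrite -(perpK J) perpJ.
Qed.

End Metric3LieIdeals.

Theorem mainTheorem9 (R : realType) (V : vectType R)
  (br : V -> V -> V -> V) (form : V -> V -> R)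
  (HV : metric3Lie br form) (I : {vspace V}) (HI : ideal br I) :
  ideal br (perp form I) /\
  ideal_of br (perp form I) (centraliser br I) /\
  (minimal_ideal br I -> maximal_ideal br (perp form I)).
Proof.
have idperp := perp_ideal HV HI.
split=> //; split; last exact: perp_minimal_maximal.
split=> [x|x s t xperp _ _]; first exact: perp_sub_centraliser.
exact: idperp.
Qed.
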